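(* Let $(P,\leqslant)$ be a conditionally-complete interpolating poset and let $P^* := \{x \in P : \exists\, y \in P,\ y \ll x\}$. Let $D$ be a directed subset of $P$ bounded above, and assume there exists $y \in P^*$ with $y \leqslant \bigvee D$. Then $D \cap P^* \neq \emptyset$; consequently $D \cap P^*$ is directed and $\bigvee D = \bigvee (D \cap P^* )$.
   Context: A poset is conditionally-complete if every nonempty subset bounded above has a supremum. A nonempty subset $D$ is directed if any two elements of $D$ have an upper bound in $D$. For $x,y \in P$, $x \ll y$ ($x$ way-below $y$) means: for every directed subset $D$ of $P$ bounded above with supremum $d_0$, $y \leqslant d_0$ implies $x \leqslant d$ for some $d \in D$. $P$ is interpolating if whenever $x \ll y$ there is $z \in P$ with $x \ll z \ll y$. *)

From HB Require Import structures.
From mathcomp Require Import all_boot all_order.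
Set Implicit Arguments. Unset Strict Implicit. Unset Printing Implicit Defensive.
Import Order.TTheory.
Local Open Scope order_scope.

Section PosetDefs.
Context {disp : Order.disp_t} {T : porderType disp}.

Definition upper_bound (A : T -> Prop) (u : T) : Prop := forall a, A a -> a <= u.
Definition bounded_above (A : T -> Prop) : Prop := exists u, upper_bound A u.
Definition is_sup (A : T -> Prop) (s : T) : Prop :=
  upper_bound A s /\ forall u, upper_bound A u -> s <= u.

Definition cond_complete : Prop :=
  forall A : T -> Prop, (exists a, A a) -> bounded_above A -> exists s, is_sup A s.

Definition directed (D : T -> Prop) : Prop :=
  (exists d, D d) /\
  forall x y, D x -> D y -> exists z, D z /\ x <= z /\ y <= z.

Definition way_below (x y : T) : Prop :=
  forall (D : T -> Prop) (d0 : T),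
    directed D -> bounded_above D -> is_sup D d0 -> y <= d0 ->
    exists d, D d /\ x <= d.

Definition interpolating : Prop :=
  forall x y, way_below x y -> exists z, way_below x z /\ way_below z y.

Definition Pstar (x : T) : Prop := exists y, way_below y x.

End PosetDefs.

(* Given [w << y] with [y <= sup D], interpolate [w << z << y]; then [z << y]
   yields some [d] in [D] above [z], and [w << z <= d] puts [d] in [P^*].
   As [P^*] is upward closed, its trace on the directed set [D] is directed
   and cofinal in [D], hence has the same supremum. *)
From mathcomp Require Import all_boot all_order.
Set Implicit Arguments.
Import Order.POrderTheory.
Local Open Scope order_scope.

Section WayBelow.
Context {disp : Order.disp_t} {T : porderType disp}.

Definition upward_closed (U : T -> Prop) : Prop :=
  forall x y, U x -> x <= y -> U y.

Definition cofinal (E D : T -> Prop) : Prop :=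
  forall a, D a -> exists2 e, E e & a <= e.

Lemma way_below_le_trans (x y z : T) : way_below x y -> y <= z -> way_below x z.
Proof.
move=> xy yz D d0 dirD bndD supD zd0.
exact: (xy D d0) (le_trans yz zd0).
Qed.

Lemma Pstar_upward_closed : upward_closed Pstar.
Proof. by move=> x z [w wx] xz; exists w; exact: way_below_le_trans xz. Qed.

Lemma is_sup_cofinal (D E : T -> Prop) (s : T) :
  (forall x, E x -> D x) -> cofinal E D -> is_sup D s -> is_sup E s.
Proof.
move=> ED cofE [ubD leastD]; split=> [e /ED|u ubE]; first exact: ubD.
by apply: leastD => a /cofE [e /ubE eu ae]; exact: le_trans eu.
Qed.

Section DirectedTrace.
Variables (D U : T -> Prop).
Hypotheses (dirD : directed D) (closedU : upward_closed U).
Hypothesis meetDU : exists x, D x /\ U x.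

Lemma directed_trace_cofinal : cofinal (fun x => D x /\ U x) D.
Proof.
move=> a Da; have [e [De Ue]] := meetDU.
have [c [Dc [ac ec]]] := dirD.2 a e Da De.
by exists c => //; split => //; exact: closedU ec.
Qed.

Lemma directed_trace : directed (fun x => D x /\ U x).
Proof.
split=> // a b [Da Ua] [Db _].
have [c [Dc [ac bc]]] := dirD.2 a b Da Db.
by exists c; split=> //; split=> //; exact: closedU ac.
Qed.

End DirectedTrace.

Lemma directed_meets_Pstar (D : T -> Prop) (s y : T) :
  @interpolating disp T -> directed D -> bounded_above D -> is_sup D s ->
  Pstar y -> y <= s -> exists x, D x /\ Pstar x.
Proof.
move=> interp dirD bndD supD [w wy] ys.
have [z [wz zy]] := interp _ _ wy.
have [d [Dd zd]] := zy D s dirD bndD supD ys.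
by exists d; split=> //; exists w; exact: way_below_le_trans zd.
Qed.

End WayBelow.

Theorem lemma2p3 (disp : Order.disp_t) (T : porderType disp) :
  @cond_complete disp T -> @interpolating disp T ->
  forall (D : T -> Prop) (supD : T),
    directed D -> bounded_above D -> is_sup D supD ->
    (exists y : T, Pstar y /\ y <= supD) ->
    (exists x, D x /\ Pstar x) /\
    directed (fun x => D x /\ Pstar x) /\
    is_sup (fun x => D x /\ Pstar x) supD.
Proof.
move=> _ interp D supD dirD bndD supD_D [y [Py ysup]].
have meet := directed_meets_Pstar interp dirD bndD supD_D Py ysup.
split=> //; split; first exact: directed_trace Pstar_upward_closed meet.
apply: is_sup_cofinal supD_D => [x []//|].
exact: directed_trace_cofinal Pstar_upward_closed meet.
Qed.
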